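(* Under the standing setup, let $g,\tilde g,h,\tilde h$ satisfy $1\ge g\ge\tilde g\ge0$ and $1\ge h\ge\tilde h\ge0$. If $q(g,h)\ge0$ and $m(\tilde g,\tilde h)\ge0$, then $f(g,h)\ge f(\tilde g,\tilde h)$.
   Context: Standing setup. Fix $n\in\mathbb N$ and $W=[w_{ij}]\in\mathbb R^{n\times n}$ with $w_{ij}\ge0$, $w_{ii}=0$. Let $\|W\|_\infty=\max_i\sum_j|w_{ij}|$, $\|W\|_1=\max_j\sum_i|w_{ij}|$, let $\lambda$ be the spectral radius of $W$, and assume there is $c\in\mathbb R^n$ with all entries positive and $W^\top c=\lambda c$. Fix $\beta\ge\gamma\ge0$ with $1-\max\{\|W\|_\infty,\|W\|_1\}>\max\{2\beta,4\gamma\}$. Fix $s\in[0,1]^n$; set $\widehat c_i=c_i/\sum_jc_j$, $\widehat s=\sum_i\widehat c_is_i$, $\chi=\sum_i\widehat c_is_i\sum_jw_{ij}$. For $g,h\in[0,1]$ define $$f(g,h)=\frac{(1-2\beta+(h-g)\gamma)\widehat s-\chi+(h+g)\beta+(g^2-h^2)\gamma}{1-\lambda+(g-h)\gamma}\,c^\top\mathbf 1,$$ $$q(g,h)=(\beta+\gamma\widehat s-2\gamma h)(1-\lambda+\gamma g)+\gamma\big[(1-2\beta-g\gamma)\widehat s-\chi+g\beta+g^2\gamma\big]+\gamma^2h^2,$$ $$m(g,h)=(\beta-\gamma\widehat s+2\gamma g)(1-\lambda-h\gamma)+g^2\gamma^2-\gamma\big[(1-2\beta+h\gamma)\widehat s+h\beta-h^2\gamma-\chi\big].$$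 *)

From HB Require Import structures.
From mathcomp Require Import all_boot all_order all_algebra.
Set Implicit Arguments. Unset Strict Implicit. Unset Printing Implicit Defensive.
Import Order.TTheory GRing.Theory Num.Theory.
Local Open Scope ring_scope.

Section Defs.
Variables (R : realFieldType) (n : nat).

(* ||W||_oo = max_i sum_j |w_ij|  (max of nonnegative numbers; 0 if n = 0) *)
Definition norm_inf (W : 'M[R]_n) : R :=
  \big[Num.max/0]_(i < n) \sum_(j < n) `|W i j|.
Definition norm_one (W : 'M[R]_n) : R :=
  \big[Num.max/0]_(j < n) \sum_(i < n) `|W i j|.

(* a + i b is a (complex) eigenvalue of the real matrix W: there is a nonzero
   complex vector x + i y with W (x + i y) = (a + i b)(x + i y). *)
Definition complex_eigenvalue (W : 'M[R]_n) (a b : R) : Prop :=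
  exists x y : 'cV[R]_n, (x != 0 \/ y != 0) /\
    W *m x = a *: x - b *: y /\ W *m y = b *: x + a *: y.

(* lam is the spectral radius of W: the maximum modulus of the complex
   eigenvalues of W (moduli compared through their squares). *)
Definition spectral_radius (W : 'M[R]_n) (lam : R) : Prop :=
  0 <= lam /\
  (exists a b, complex_eigenvalue W a b /\ a ^+ 2 + b ^+ 2 = lam ^+ 2) /\
  (forall a b, complex_eigenvalue W a b -> a ^+ 2 + b ^+ 2 <= lam ^+ 2).

Definition chat (c : 'cV[R]_n) (i : 'I_n) : R := c i 0 / \sum_(j < n) c j 0.
Definition shat (c s : 'cV[R]_n) : R := \sum_(i < n) chat c i * s i 0.
Definition chi (W : 'M[R]_n) (c s : 'cV[R]_n) : R :=
  \sum_(i < n) chat c i * s i 0 * \sum_(j < n) W i j.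
Definition csum (c : 'cV[R]_n) : R := \sum_(i < n) c i 0.

Definition f_fun (W : 'M[R]_n) (c s : 'cV[R]_n) (lam beta gamma g h : R) : R :=
  ((1 - 2 * beta + (h - g) * gamma) * shat c s - chi W c s + (h + g) * beta
     + (g ^+ 2 - h ^+ 2) * gamma) / (1 - lam + (g - h) * gamma) * csum c.

Definition q_fun (W : 'M[R]_n) (c s : 'cV[R]_n) (lam beta gamma g h : R) : R :=
  (beta + gamma * shat c s - 2 * gamma * h) * (1 - lam + gamma * g)
  + gamma * ((1 - 2 * beta - g * gamma) * shat c s - chi W c s + g * beta
             + g ^+ 2 * gamma)
  + gamma ^+ 2 * h ^+ 2.

Definition m_fun (W : 'M[R]_n) (c s : 'cV[R]_n) (lam beta gamma g h : R) : R :=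
  (beta - gamma * shat c s + 2 * gamma * g) * (1 - lam - h * gamma)
  + g ^+ 2 * gamma ^+ 2
  - gamma * ((1 - 2 * beta + h * gamma) * shat c s + h * beta
             - h ^+ 2 * gamma - chi W c s).

End Defs.

From HB Require Import structures.
From mathcomp Require Import all_boot all_order all_algebra.
From mathcomp Require Import ring lra.
Set Implicit Arguments. Unset Strict Implicit. Unset Printing Implicit Defensive.
Import Order.TTheory GRing.Theory Num.Theory.
Local Open Scope ring_scope.

(* Write f(g,h) = N(g,h) / D(g,h) * c^T 1 with D(g,h) = 1 - lam + (g-h) gamma.
   The polynomials q and m are exactly the numerators of the discrete
   monotonicity quotients of N/D:
     N(g,h)  D(g,h~) - N(g,h~) D(g,h)  = (h-h~) (q(g,h)  + gamma (h-h~) D(g,h)),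
     N(g,h~) D(g~,h~) - N(g~,h~) D(g,h~) = (g-g~) (m(g~,h~) + gamma (g-g~) D(g~,h~)).
   Hence, as soon as all denominators are positive, q(g,h) >= 0 makes N/D
   nondecreasing from (g,h~) to (g,h), and m(g~,h~) >= 0 makes it
   nondecreasing from (g~,h~) to (g,h~); chaining gives the theorem.
   Positivity of D on [0,1]^2 follows from 1 - lam > 4 gamma, which in turn
   comes from the Perron-type bound lam <= ||W||_oo: summing the
   left-eigenvector equation W^T c = lam c over all entries expresses
   lam * c^T 1 as a c-weighted average of the row sums of W. *)

Lemma left_eigenvalue_le_norm_inf (R : realFieldType) (n : nat)
    (W : 'M[R]_n) (c : 'cV[R]_n) (lam : R) :
  (forall i j, 0 <= W i j) -> (forall i, 0 <= c i 0) ->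
  W^T *m c = lam *: c -> 0 < csum c -> lam <= norm_inf W.
Proof.
move=> W_ge0 c_ge0 c_eig csum_gt0.
have mass_eq : csum c * lam = \sum_(j < n) c j 0 * \sum_(i < n) W j i.
  rewrite mulrC /csum mulr_sumr.
  transitivity (\sum_(i < n) (W^T *m c) i 0).
    by apply: eq_bigr => i _; rewrite c_eig !mxE.
  under eq_bigr => i _ do rewrite mxE.
  rewrite exchange_big /=; apply: eq_bigr => j _.
  by rewrite mulr_sumr; apply: eq_bigr => i _; rewrite mxE mulrC.
rewrite -(ler_pM2l csum_gt0) mass_eq /csum mulr_suml.
apply: ler_sum => j _; apply: ler_wpM2l; first exact: c_ge0.
have -> : \sum_(i < n) W j i = \sum_(i < n) `|W j i|.
  by apply: eq_bigr => i _; rewrite ger0_norm.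
exact: (le_bigmax _ (fun j => \sum_(i < n) `|W j i|)).
Qed.

Lemma ler_quotient (R : realFieldType) (N1 N2 D1 D2 : R) :
  0 < D1 -> 0 < D2 -> 0 <= N1 * D2 - N2 * D1 -> N2 / D2 <= N1 / D1.
Proof.
move=> D1_gt0 D2_gt0; rewrite subr_ge0 => cross.
by rewrite ler_pdivrMr // mulrAC ler_pdivlMr.
Qed.

Section Quotient.
Variables (R : realFieldType) (n : nat) (W : 'M[R]_n) (c s : 'cV[R]_n).
Variables (lam beta gamma : R).

Definition f_num (g h : R) : R :=
  (1 - 2 * beta + (h - g) * gamma) * shat c s - chi W c s + (h + g) * beta
    + (g ^+ 2 - h ^+ 2) * gamma.
Definition f_den (g h : R) : R := 1 - lam + (g - h) * gamma.

Lemma f_funE (g h : R) :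
  f_fun W c s lam beta gamma g h = f_num g h / f_den g h * csum c.
Proof. by []. Qed.

Lemma f_den_gt0 (g h : R) :
  0 <= gamma -> 4 * gamma < 1 - lam -> 0 <= g -> h <= 1 -> 0 < f_den g h.
Proof. rewrite /f_den => *; nra. Qed.

Lemma f_num_increment_h (g h ht : R) :
  f_num g h * f_den g ht - f_num g ht * f_den g h
  = (h - ht) * (q_fun W c s lam beta gamma g h + gamma * (h - ht) * f_den g h).
Proof. rewrite /f_num /f_den /q_fun; ring. Qed.

Lemma f_num_increment_g (g gt h : R) :
  f_num g h * f_den gt h - f_num gt h * f_den g h
  = (g - gt) * (m_fun W c s lam beta gamma gt h + gamma * (g - gt) * f_den gt h).
Proof. rewrite /f_num /f_den /m_fun; ring. Qed.

Hypothesis gamma_ge0 : 0 <= gamma.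

Lemma quotient_mono_h (g h ht : R) :
  ht <= h -> 0 < f_den g h -> 0 < f_den g ht ->
  0 <= q_fun W c s lam beta gamma g h ->
  f_num g ht / f_den g ht <= f_num g h / f_den g h.
Proof.
move=> ht_le_h den_gt0 den_t_gt0 q_ge0.
apply: ler_quotient => //; rewrite f_num_increment_h.
apply: mulr_ge0; first by rewrite subr_ge0.
by apply: addr_ge0 => //; rewrite !mulr_ge0 ?subr_ge0 // ltW.
Qed.

Lemma quotient_mono_g (g gt h : R) :
  gt <= g -> 0 < f_den g h -> 0 < f_den gt h ->
  0 <= m_fun W c s lam beta gamma gt h ->
  f_num gt h / f_den gt h <= f_num g h / f_den g h.
Proof.
move=> gt_le_g den_gt0 den_t_gt0 m_ge0.
apply: ler_quotient => //; rewrite f_num_increment_g.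
apply: mulr_ge0; first by rewrite subr_ge0.
by apply: addr_ge0 => //; rewrite !mulr_ge0 ?subr_ge0 // ltW.
Qed.

End Quotient.

Theorem lemma4 (R : realFieldType) (n : nat) (W : 'M[R]_n) (lam : R)
    (c s : 'cV[R]_n) (beta gamma : R) (g gt h ht : R)
    (hW_nonneg : forall i j, 0 <= W i j)
    (hW_diag : forall i, W i i = 0)
    (hlam : spectral_radius W lam)
    (hc_pos : forall i, 0 < c i 0)
    (hc_eig : W^T *m c = lam *: c)
    (hbg : beta >= gamma) (hg0 : gamma >= 0)
    (hnorm : 1 - Num.max (norm_inf W) (norm_one W)
               > Num.max (2 * beta) (4 * gamma))
    (hs : forall i, 0 <= s i 0 <= 1)
    (hg : 1 >= g) (hggt : g >= gt) (hgt : gt >= 0)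
    (hh : 1 >= h) (hhht : h >= ht) (hht : ht >= 0)
    (hq : q_fun W c s lam beta gamma g h >= 0)
    (hm : m_fun W c s lam beta gamma gt ht >= 0) :
  f_fun W c s lam beta gamma g h >= f_fun W c s lam beta gamma gt ht.
Proof.
have c_ge0 i : 0 <= c i 0 by exact: ltW.
have csum_ge0 : 0 <= csum c by apply: sumr_ge0.
have [csum_eq0 | csum_neq0] := eqVneq (csum c) 0.
  by rewrite !f_funE csum_eq0 !mulr0.
have csum_gt0 : 0 < csum c by rewrite lt_def csum_neq0.
have lam_le := left_eigenvalue_le_norm_inf hW_nonneg c_ge0 hc_eig csum_gt0.
have gap : 4 * gamma < 1 - lam.
  have := le_max (norm_inf W) (norm_inf W) (norm_one W).
  have := le_max (4 * gamma) (2 * beta) (4 * gamma).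
  rewrite !lexx orbT /= => max_ge_4g max_ge_inf; lra.
have den_gt0 a b : 0 <= a -> b <= 1 -> 0 < f_den lam gamma a b.
  exact: f_den_gt0.
rewrite !f_funE; apply: ler_wpM2r => //.
apply: (@le_trans _ _ (f_num W c s beta gamma g ht / f_den lam gamma g ht)).
  by apply: quotient_mono_g; rewrite ?den_gt0 //; lra.
by apply: quotient_mono_h; rewrite ?den_gt0 //; lra.
Qed.
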